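(* Let $N \ge 2$, let $0 \le z_1 < z_2 < \dots < z_N < 1$, let $\alpha_1, \dots, \alpha_N > 0$ with $\sum_{i=1}^N \alpha_i = 1$, and let $\mu = \sum_{i=1}^N \alpha_i \delta_{z_i}$ on $\mathcal I = [0,1]$. Then the $\mu$-energy form $\mathcal E(f,g) = \langle \nabla^{\mu} f, \nabla^{\mu} g\rangle_\mu$, defined for $f,g \in \mathscr D^1_\mu$, is a Dirichlet form on $L^2_\mu$ (i.e. it is a symmetric, non-negative, closed bilinear form with the Markov property: for every $f$ in its domain, $\hat f = \min(\max(f,0),1)$ is in the domain and $\mathcal E(\hat f,\hat f) \le \mathcal E(f,f)$).
   Context: $\delta_z$ denotes the Dirac measure at $z$. $L^2_\mu$ is the space of ($\mu$-a.e. equivalence classes of) real-valued square-integrable functions on $[0,1]$ with inner product $\langle f,g\rangle_\mu = \sum_{i=1}^N \alpha_i f(z_i) g(z_i)$. The set of $\mu$-differentiable functions with periodic boundary conditions is $\mathscr D^1_\mu = \{ f : [0,1]\to\mathbb R \text{ square-integrable w.r.t. } \mu : \exists f' \in L^2_\mu \text{ with } f(0)=f(1) \text{ and } f(x) = f(0) + \int \mathbf 1_{[0,x)} f' \, d\mu \text{ for all } x \in [0,1]\}$, where $[0,0)=\emptyset$; $f'$ is unique in $L^2_\mu$ and the $\mu$-derivative is $\nabla^\mu f := f'$. Equivalently $f(x) = f(0) + \sum_{i: z_i < x} \alpha_i \nabla^\mu f(z_i)$. Every class in $L^2_\mu$ has a representative in $\mathscr D^1_\mu$, and $\mathscr D^1_\mu$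 is identified with $L^2_\mu$ in this way. Explicitly, $\nabla^\mu f(z_n) = (f(z_{n+1}) - f(z_n))/\alpha_n$ for $n \in \{1,\dots,N-1\}$ and $\nabla^\mu f(z_N) = (f(z_1) - f(z_N))/\alpha_N$. *)

From Stdlib Require Import ClassicalEpsilon.
From mathcomp Require Import all_boot all_order all_algebra.
From mathcomp Require Import reals.
Set Implicit Arguments. Unset Strict Implicit. Unset Printing Implicit Defensive.
Import Order.TTheory GRing.Theory Num.Theory.
Local Open Scope ring_scope.

(* The measure mu = \sum_i alpha_i delta_{z_i} on [0,1] is encoded by the
   atoms z : 'I_N -> R and the weights alpha : 'I_N -> R.
   Functions on [0,1] are represented as f : R -> R (values outside [0,1]
   are irrelevant).  An element of L^2_mu (a mu-a.e. class) is determined by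
   its values at the atoms; the mu-derivative f' in L^2_mu is therefore
   represented by its values f' i = f'(z_i), i.e. by f' : 'I_N -> R. *)

Section MuCalculus.
Variable R : realType.
Variable N : nat.
Variables (z alpha : 'I_N -> R).

Definition mu_inner (f g : R -> R) : R := \sum_(i < N) alpha i * f (z i) * g (z i).

(* f' is a mu-derivative of f:
   f(0) = f(1) and f(x) = f(0) + \int 1_{[0,x)} f' dmu for all x in [0,1],
   where \int 1_{[0,x)} f' dmu = \sum_{i : z_i < x} alpha_i f'(z_i)
   (all z_i are >= 0). *)
Definition is_mu_deriv (f : R -> R) (f' : 'I_N -> R) : Prop :=
  f 0 = f 1 /\
  forall x : R, 0 <= x <= 1 ->
    f x = f 0 + \sum_(i < N | z i < x) alpha i * f' i.

Definition D1_mu (f : R -> R) : Prop := exists f' : 'I_N -> R, is_mu_deriv f f'.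

(* nabla^mu f : a (chosen) mu-derivative of f (unique in L^2_mu when it exists) *)
Definition mu_grad (f : R -> R) : 'I_N -> R :=
  epsilon (inhabits (fun _ : 'I_N => 0 : R)) (is_mu_deriv f).

Definition mu_energy (f g : R -> R) : R :=
  \sum_(i < N) alpha i * mu_grad f i * mu_grad g i.

End MuCalculus.

Definition lin_comb (R : realType) (a : R) (f g : R -> R) : R -> R :=
  fun x => a * f x + g x.

Definition clip01 (R : realType) (f : R -> R) : R -> R :=
  fun x => Num.min (Num.max (f x) 0) 1.

Definition is_dirichlet_form (R : realType)
  (ip : (R -> R) -> (R -> R) -> R)
  (dom : (R -> R) -> Prop)
  (E : (R -> R) -> (R -> R) -> R) : Prop :=
  dom (fun _ => 0) /\
  (forall a f g, dom f -> dom g -> dom (lin_comb a f g)) /\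
  (* bilinear (linear in the first argument; with symmetry, in both) *)
  (forall a f g h, dom f -> dom g -> dom h ->
     E (lin_comb a f g) h = a * E f h + E g h) /\
  (forall f g, dom f -> dom g -> E f g = E g f) /\
  (forall f, dom f -> 0 <= E f f) /\
  (* closed: the domain is complete for E_1(u) = E(u,u) + <u,u> *)
  (forall u : nat -> R -> R, (forall n, dom (u n)) ->
     (forall e : R, 0 < e -> exists M : nat, forall n m : nat, (M <= n)%N -> (M <= m)%N ->
        E (lin_comb (-1) (u m) (u n)) (lin_comb (-1) (u m) (u n))
        + ip (lin_comb (-1) (u m) (u n)) (lin_comb (-1) (u m) (u n)) < e) ->
     exists f, dom f /\
     (forall e : R, 0 < e -> exists M : nat, forall n : nat, (M <= n)%N ->
        E (lin_comb (-1) f (u n)) (lin_comb (-1) f (u n))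
        + ip (lin_comb (-1) f (u n)) (lin_comb (-1) f (u n)) < e)) /\
  (forall f, dom f -> dom (clip01 f) /\ E (clip01 f) (clip01 f) <= E f f).

(* Since the atoms are increasing, an element of D^1_mu is a step function: on
   [0,1] its value at x depends only on the number k of atoms below x, f x = H k,
   with H N = H 0 by periodicity; conversely every such step function lies in
   D^1_mu, with mu-derivative (H (i+1) - H i) / alpha_i.  So the domain is stable
   under linear combinations and under composition with an arbitrary phi, and
   nabla^mu f is the difference quotient of f along cyclically consecutive atoms.
   Clipping to [0,1] is 1-Lipschitz, hence shrinks every difference quotient:
   this is the Markov property.  For closedness, the E_1-norm dominates each
   alpha_i f(z_i)^2, so along an E_1-Cauchy sequence the atom values converge; a
   step function interpolates the limits, and since the E_1-norm is a continuous
   function of finitely many atom values, it is the E_1-limit. *)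

From Stdlib Require Import ClassicalEpsilon.
From mathcomp Require Import all_boot all_order all_algebra.
From mathcomp Require Import reals topology normedtype.
From mathcomp Require Import ring lra.
Import Order.TTheory GRing.Theory Num.Theory.
Set Implicit Arguments. Unset Strict Implicit. Unset Printing Implicit Defensive.
Import numFieldNormedType.Exports.
Local Open Scope classical_set_scope.
Local Open Scope ring_scope.

Lemma sum_ord_ltS (V : nmodType) (n : nat) (F : 'I_n -> V) (i : 'I_n) :
  \sum_(j < n | (j < i.+1)%N) F j = \sum_(j < n | (j < i)%N) F j + F i.
Proof.
rewrite (bigD1 i) ?ltnSn //= addrC; congr (_ + _).
by apply: eq_bigl => j; rewrite ltnS [(j < i)%N]ltn_neqAle andbC.
Qed.

Lemma telescope_sum_ord (V : zmodType) (n k : nat) (H : nat -> V) :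
  (k <= n)%N -> \sum_(i < n | (i < k)%N) (H i.+1 - H i) = H k - H 0%N.
Proof.
move=> kn; rewrite -(big_ord_widen n (fun i => H i.+1 - H i)) //.
by rewrite -(big_mkord xpredT (fun i => H i.+1 - H i)) telescope_sumr.
Qed.

Lemma ord_cut_inj (n k l : nat) : (k <= n)%N -> (l <= n)%N ->
  (forall i : 'I_n, (i < k)%N = (i < l)%N) -> k = l.
Proof.
move=> kn ln cut; case: (ltngtP k l) => // [kl | lk].
- by have := cut (Ordinal (leq_trans kl ln)); rewrite /= ltnn kl.
- by have := cut (Ordinal (leq_trans lk kn)); rewrite /= ltnn lk.
Qed.

Lemma ler_sqr_norm (R : realDomainType) (x y : R) :
  (x ^+ 2 <= y ^+ 2) = (`|x| <= `|y|).
Proof.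
by rewrite -(real_normK (num_real x)) -(real_normK (num_real y)) ler_sqr ?nnegrE.
Qed.

Lemma ltr_sqr_norm (R : realDomainType) (x y : R) :
  (x ^+ 2 < y ^+ 2) = (`|x| < `|y|).
Proof.
by rewrite -(real_normK (num_real x)) -(real_normK (num_real y)) ltr_sqr ?nnegrE.
Qed.

Lemma cvg_sum0 (R : numFieldType) (I : finType) (F : I -> nat -> R) :
  (forall i, F i @ \oo --> 0) -> (fun n => \sum_i F i n) @ \oo --> 0.
Proof.
move=> F0; suff : (fun n => \sum_i F i n) @ \oo --> \sum_(i : I) (0 : R) by rewrite big1.
by apply: cvg_big => //; exact: add_continuous.
Qed.

Lemma clip01_lipschitz (R : realDomainType) (a b : R) :
  `|Num.min (Num.max a 0) 1 - Num.min (Num.max b 0) 1| <= `|a - b|.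
Proof.
have := ler_norm (a - b); have := ler_norm (b - a); rewrite distrC => h1 h2.
rewrite !maxEle; have [ha|ha] := leP a 0; have [hb|hb] := leP b 0;
rewrite !minEle ?ler01; have [ha1|ha1] := leP a 1; have [hb1|hb1] := leP b 1;
rewrite ler_norml; apply/andP; split; lra.
Qed.

Section AtomicEnergy.

Variable R : realType.
Variable N : nat.
Variables z alpha : 'I_N -> R.
Hypothesis z_incr : forall i j : 'I_N, (i < j)%N -> z i < z j.
Hypothesis z_in01 : forall i : 'I_N, 0 <= z i /\ z i < 1.
Hypothesis alpha_gt0 : forall i : 'I_N, 0 < alpha i.

Local Notation D1 := (D1_mu z alpha).

Lemma ltz_ord (i j : 'I_N) : (z i < z j) = (i < j)%N.
Proof.
case: (ltngtP i j) => [ij | ji | /val_inj ->]; first exact: z_incr.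
  by apply/negbTE; rewrite -leNgt ltW ?z_incr.
by rewrite ltxx.
Qed.

Definition nbelow (x : R) : nat := \max_(i | z i < x) i.+1.

Lemma ltz_nbelow (x : R) (i : 'I_N) : (z i < x) = (i < nbelow x)%N.
Proof.
apply/idP/idP => [zix | ].
  exact: (@leq_bigmax_cond _ (fun j => z j < x) (fun j : 'I_N => j.+1)).
apply: contraTT; rewrite -leNgt -leqNgt => xzi; apply/bigmax_leqP => j zjx.
by rewrite -ltz_ord (lt_le_trans zjx).
Qed.

Lemma nbelow_le (x : R) : (nbelow x <= N)%N.
Proof. by apply/bigmax_leqP => i _; exact: ltn_ord. Qed.

Lemma nbelow_z (i : 'I_N) : nbelow (z i) = i.
Proof.
by apply: ord_cut_inj (nbelow_le _) (ltnW (ltn_ord i)) _ => j; rewrite -ltz_nbelow ltz_ord.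
Qed.

Lemma nbelow0 : nbelow 0 = 0%N.
Proof.
by apply: ord_cut_inj (nbelow_le _) _ _ => // j; rewrite -ltz_nbelow ltNge (z_in01 j).1.
Qed.

Lemma nbelow1 : nbelow 1 = N.
Proof.
by apply: ord_cut_inj (nbelow_le _) _ _ => // j; rewrite -ltz_nbelow (z_in01 j).2 ltn_ord.
Qed.

Definition mu_steps (H : nat -> R) (f : R -> R) : Prop :=
  H N = H 0%N /\ forall x : R, 0 <= x <= 1 -> f x = H (nbelow x).

Lemma mu_steps_of_deriv (f : R -> R) (f' : 'I_N -> R) : is_mu_deriv z alpha f f' ->
  mu_steps (fun m => f 0 + \sum_(i < N | (i < m)%N) alpha i * f' i) f.
Proof.
move=> [f01 fP]; set H := fun m => _.
have fH x : 0 <= x <= 1 -> f x = H (nbelow x).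
  by move=> /fP ->; congr (_ + _); apply: eq_bigl => i; rewrite ltz_nbelow.
by split=> //; rewrite -nbelow1 -nbelow0 -!fH ?lexx ?ler01.
Qed.

Lemma mu_deriv_of_steps (H : nat -> R) (f : R -> R) : mu_steps H f ->
  is_mu_deriv z alpha f (fun i => (H i.+1 - H i) / alpha i).
Proof.
move=> [HN fH]; have f0 : f 0 = H 0%N by rewrite fH ?lexx ?ler01 ?nbelow0.
split; first by rewrite f0 fH ?lexx ?ler01 // nbelow1 HN.
move=> x x01; rewrite fH // f0.
under eq_bigr do rewrite mulrC divfK ?gt_eqF ?alpha_gt0 //.
rewrite (eq_bigl (fun i : 'I_N => (i < nbelow x)%N)) => [|i]; last by rewrite ltz_nbelow.
by rewrite telescope_sum_ord ?nbelow_le // addrC subrK.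
Qed.

Lemma D1_muP (f : R -> R) : D1 f <-> exists H, mu_steps H f.
Proof.
split=> [[f' /mu_steps_of_deriv] | [H /mu_deriv_of_steps]]; by eexists; eassumption.
Qed.

Lemma D1_mu0 : D1 (fun _ => 0).
Proof. by apply/D1_muP; exists (fun _ => 0). Qed.

Lemma D1_mu_lin_comb (a : R) (f g : R -> R) : D1 f -> D1 g -> D1 (lin_comb a f g).
Proof.
move=> /D1_muP[Hf [Hf0 fH]] /D1_muP[Hg [Hg0 gH]]; apply/D1_muP.
exists (fun m => a * Hf m + Hg m); split=> [|x x01]; first by rewrite Hf0 Hg0.
by rewrite /lin_comb fH ?gH.
Qed.

Lemma D1_mu_comp (phi : R -> R) (f : R -> R) : D1 f -> D1 (phi \o f).
Proof.
move=> /D1_muP[H [H0 fH]]; apply/D1_muP; exists (phi \o H).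
by split=> [|x x01] /=; rewrite ?H0 ?fH.
Qed.

Lemma D1_mu_interpolate (N_gt0 : (0 < N)%N) (v : 'I_N -> R) :
  exists2 f, D1 f & forall i, f (z i) = v i.
Proof.
pose H m := v (Ordinal (ltn_pmod m N_gt0)).
exists (fun x => H (nbelow x)) => [|i]; last first.
  by rewrite nbelow_z /H; congr v; apply: val_inj; rewrite /= modn_small.
apply/D1_muP; exists H; split=> //.
by rewrite /H; congr v; apply: val_inj; rewrite /= modnn mod0n.
Qed.

Definition mu_diff (f : R -> R) (i : 'I_N) : R := (f (z (ordS i)) - f (z i)) / alpha i.

Lemma mu_steps_atom_diff (H : nat -> R) (f : R -> R) (i : 'I_N) : mu_steps H f ->
  f (z (ordS i)) - f (z i) = H i.+1 - H i.
Proof.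
have z01 j : 0 <= z j <= 1 by rewrite (z_in01 j).1 ltW ?(z_in01 j).2.
move=> [HN fH]; rewrite !fH // !nbelow_z /=; congr (_ - _).
case: (ltngtP i.+1 N) => [iN | | iN]; first by rewrite modn_small.
  by rewrite ltnNge ltn_ord.
by rewrite iN modnn HN.
Qed.

Lemma mu_gradE (f : R -> R) (i : 'I_N) : D1 f -> mu_grad z alpha f i = mu_diff f i.
Proof.
move=> Df; have gradP : is_mu_deriv z alpha f (mu_grad z alpha f).
  by rewrite /mu_grad; apply: epsilon_spec; case: Df => f' ?; exists f'.
rewrite /mu_diff (mu_steps_atom_diff i (mu_steps_of_deriv gradP)) sum_ord_ltS.
by rewrite addrA [_ + alpha i * _]addrC addrK mulrC mulKf ?gt_eqF.
Qed.

Lemma mu_energyE (f g : R -> R) : D1 f -> D1 g ->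
  mu_energy z alpha f g = \sum_(i < N) alpha i * mu_diff f i * mu_diff g i.
Proof. by move=> Df Dg; apply: eq_bigr => i _; rewrite !mu_gradE. Qed.

Lemma mu_diff_lin_comb (a : R) (f g : R -> R) (i : 'I_N) :
  mu_diff (lin_comb a f g) i = a * mu_diff f i + mu_diff g i.
Proof. by rewrite /mu_diff /lin_comb; ring. Qed.

Lemma mu_diff_comp_norm (phi f : R -> R) (i : 'I_N) :
  (forall a b, `|phi a - phi b| <= `|a - b|) ->
  `|mu_diff (phi \o f) i| <= `|mu_diff f i|.
Proof.
move=> phi_lip; rewrite /mu_diff !normf_div ler_wpM2r ?invr_ge0 ?normr_ge0 //.
exact: phi_lip.
Qed.

Lemma alpha_sqr_ge0 (i : 'I_N) (x : R) : 0 <= alpha i * x * x.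
Proof. by rewrite -mulrA -expr2 mulr_ge0 ?sqr_ge0 ?ltW. Qed.

Lemma mu_energyC (f g : R -> R) : mu_energy z alpha f g = mu_energy z alpha g f.
Proof. by apply: eq_bigr => i _; rewrite mulrAC. Qed.

Lemma mu_energy_ge0 (f : R -> R) : 0 <= mu_energy z alpha f f.
Proof. by apply: sumr_ge0 => i _; exact: alpha_sqr_ge0. Qed.

Lemma mu_energy_lin_comb (a : R) (f g h : R -> R) : D1 f -> D1 g -> D1 h ->
  mu_energy z alpha (lin_comb a f g) h = a * mu_energy z alpha f h + mu_energy z alpha g h.
Proof.
move=> Df Dg Dh; have Dfg := D1_mu_lin_comb a Df Dg.
rewrite !mu_energyE // mulr_sumr -big_split.
apply: eq_bigr => i _; rewrite mu_diff_lin_comb.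
by rewrite mulrDr mulrDl !mulrA [alpha i * a]mulrC.
Qed.

Lemma mu_energy_contraction (phi f : R -> R) : D1 f ->
  (forall a b, `|phi a - phi b| <= `|a - b|) ->
  mu_energy z alpha (phi \o f) (phi \o f) <= mu_energy z alpha f f.
Proof.
move=> Df phi_lip; have Dphif := D1_mu_comp phi Df.
rewrite !mu_energyE //; apply: ler_sum => i _.
by rewrite -!(mulrA (alpha i)) -!expr2 ler_pM2l // ler_sqr_norm mu_diff_comp_norm.
Qed.

Definition mu_energy1 (w : R -> R) : R := mu_energy z alpha w w + mu_inner z alpha w w.

Lemma mu_energy1_ge_atom (w : R -> R) (j : 'I_N) :
  alpha j * w (z j) * w (z j) <= mu_energy1 w.
Proof.
rewrite /mu_energy1 -[X in X <= _]add0r lerD ?mu_energy_ge0 //.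
by rewrite /mu_inner (bigD1 j) //= lerDl sumr_ge0 // => i _; exact: alpha_sqr_ge0.
Qed.

Lemma mu_energy1_cvg0 (w : nat -> R -> R) : (forall n, D1 (w n)) ->
  (forall j, (fun n => w n (z j)) @ \oo --> 0) -> (fun n => mu_energy1 (w n)) @ \oo --> 0.
Proof.
move=> Dw w_atoms0.
have sqr_cvg0 (c : R) (s : nat -> R) : s @ \oo --> 0 -> (fun n => c * s n * s n) @ \oo --> 0.
  by move=> s0; have := cvgM (cvgM (cvg_cst c) s0) s0; rewrite !mulr0; apply.
have diff_cvg0 i : (fun n => mu_diff (w n) i) @ \oo --> 0.
  have := cvgM (cvgB (w_atoms0 (ordS i)) (w_atoms0 i)) (cvg_cst (alpha i)^-1).
  by rewrite subrr mul0r; apply.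
rewrite (eq_cvg _ _ (fun n => congr2 +%R (mu_energyE (Dw n) (Dw n)) erefl)).
suff : (fun n => \sum_i alpha i * mu_diff (w n) i * mu_diff (w n) i
  + \sum_i alpha i * w n (z i) * w n (z i)) @ \oo --> 0 + 0 by rewrite addr0.
by apply: cvgD; apply: cvg_sum0 => i; apply: sqr_cvg0.
Qed.

Lemma mu_energy1_cauchy_atoms (u : nat -> R -> R) :
  (forall e : R, 0 < e -> exists M : nat, forall n m : nat, (M <= n)%N -> (M <= m)%N ->
    mu_energy1 (lin_comb (-1) (u m) (u n)) < e) ->
  forall j, cvg ((fun n => u n (z j)) @ \oo).
Proof.
move=> u_cauchy j; apply: cauchy_cvg; apply: cauchy_exP => e e0.
have [M HM] := u_cauchy (alpha j * e ^+ 2) (mulr_gt0 (alpha_gt0 j) (exprn_gt0 2 e0)).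
exists (u M (z j)), M => // m Mm; rewrite -ball_normE /ball_ /=.
have := le_lt_trans (mu_energy1_ge_atom _ j) (HM m M Mm (leqnn M)).
rewrite -mulrA -expr2 ltr_pM2l // ltr_sqr_norm (gtr0_norm e0).
by rewrite /lin_comb mulN1r addrC distrC; apply.
Qed.

Lemma mu_energy1_complete (N_gt0 : (0 < N)%N) (u : nat -> R -> R) :
  (forall n, D1 (u n)) ->
  (forall e : R, 0 < e -> exists M : nat, forall n m : nat, (M <= n)%N -> (M <= m)%N ->
    mu_energy1 (lin_comb (-1) (u m) (u n)) < e) ->
  exists f, D1 f /\ forall e : R, 0 < e -> exists M : nat, forall n : nat, (M <= n)%N ->
    mu_energy1 (lin_comb (-1) f (u n)) < e.
Proof.
move=> Du u_cauchy.
have [f Df fz] := D1_mu_interpolate N_gt0 (fun j => lim ((fun n => u n (z j)) @ \oo)).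
exists f; split=> //.
have : (fun n => mu_energy1 (lin_comb (-1) f (u n))) @ \oo --> 0.
  apply: mu_energy1_cvg0 => [n | j]; first exact: D1_mu_lin_comb.
  rewrite /lin_comb fz; set l := lim _.
  suff : (fun n => -1 * l + u n (z j)) @ \oo --> -1 * l + l by rewrite mulN1r addNr.
  exact: cvgD (cvg_cst _) (mu_energy1_cauchy_atoms u_cauchy (j := j)).
move/cvgr0Pnorm_lt => E0 e e0; have [M _ HM] := E0 e e0; exists M => n Mn.
exact: le_lt_trans (ler_norm _) (HM n Mn).
Qed.

Lemma mu_energy_dirichlet_form : (0 < N)%N ->
  is_dirichlet_form (mu_inner z alpha) D1 (mu_energy z alpha).
Proof.
move=> N_gt0; split; first exact: D1_mu0.
split; first by move=> a f g; exact: D1_mu_lin_comb.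
split; first by move=> a f g h; exact: mu_energy_lin_comb.
split; first by move=> f g _ _; exact: mu_energyC.
split; first by move=> f _; exact: mu_energy_ge0.
split; first exact: mu_energy1_complete.
move=> f Df; pose clip (t : R) := Num.min (Num.max t 0) 1.
change (clip01 f) with (clip \o f); split; first exact: D1_mu_comp.
by apply: mu_energy_contraction => // a b; exact: clip01_lipschitz.
Qed.

End AtomicEnergy.

Theorem theorem2p1 (R : realType) (N : nat) (z alpha : 'I_N -> R) :
  (2 <= N)%N ->
  (forall i j : 'I_N, (i < j)%N -> z i < z j) ->
  (forall i : 'I_N, 0 <= z i /\ z i < 1) ->
  (forall i : 'I_N, 0 < alpha i) ->
  \sum_(i < N) alpha i = 1 ->
  is_dirichlet_form (mu_inner z alpha) (D1_mu z alpha) (mu_energy z alpha).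
Proof.
move=> N_ge2 z_incr z_in01 alpha_gt0 _.
exact: mu_energy_dirichlet_form z_incr z_in01 alpha_gt0 (ltnW N_ge2).
Qed.
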